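(* In the setting below, let $\overline S_i=S_a\times\{b\}$ and $\overline S_j=S_b\times\{c\}$ for some $1\le i,j\le\overline M$, $1\le a,b,c\le M$. Then for every bounded continuous $f:[0,\infty)\to\mathbb R$, $$\lim_{\varepsilon\downarrow0}\Big(\mathbb E f\Big(\frac{\overline T^\varepsilon(\bar x,\overline S_j)}{\overline\tau^\varepsilon_i}\Big)-\mathbb E f\Big(\frac{T^\varepsilon(y,S_b)}{\tau^\varepsilon_{ab}}\Big)\Big)=0$$ uniformly in $\bar x\in\overline S_i$, $y\in S_a$, where $\overline\tau^\varepsilon_i:=\tau^\varepsilon_{ab}$.
   Context: $S$ is a metric space partitioned into disjoint Borel sets $S_1,\dots,S_M$; for $\varepsilon>0$, $Q^\varepsilon$ is a Markov kernel from $S$ to $S\times[0,\infty)$, $P^\varepsilon(x,B)=Q^\varepsilon(x,B\times[0,\infty))$, and for $P^\varepsilon(x,B)>0$, $T^\varepsilon(x,B)$ has law $\mathbb P(T^\varepsilon(x,B)\le t)=Q^\varepsilon(x,B\times[0,t])/P^\varepsilon(x,B)$. Assumptions: $P^\varepsilon(x,S_i)=0$ for $x\in S_i$; for $i\ne j$, either $P^\varepsilon(x,S_j)=0$ for all $x\in S_i,\varepsilon$ (set $P^\varepsilon_{ij}\equiv0$) or it is positive for all $x\in S_i,\varepsilon$ and there are positive $P^\varepsilon_{ij}$ with $P^\varepsilon(x,S_j)/P^\varepsilon_{ij}\to1$ uniformly in $x\in S_i$; for $P^\varepsilon_{ij}\not\equiv0$ there are positive $\tau^\varepsilon_{ij}$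 with $\mathbb ET^\varepsilon(x,S_j)/\tau^\varepsilon_{ij}\to1$ uniformly in $x\in S_i$; and for every bounded continuous $f$ and $P^\varepsilon_{ij}\not\equiv0$, $\mathbb E f(T^\varepsilon(x_1,S_j)/\tau^\varepsilon_{ij})-\mathbb E f(T^\varepsilon(x_2,S_j)/\tau^\varepsilon_{ij})\to0$ uniformly in $x_1,x_2\in S_i$. Extended process: $\overline S=\{(x,j):x\in S_i,\ P^\varepsilon_{ij}\not\equiv0\}$ with kernel $\overline Q^\varepsilon((x,j),(A\times\{k\})\times I)=\frac{1}{P^\varepsilon(x,S_j)}\int_{A\cap S_j}P^\varepsilon(y,S_k)Q^\varepsilon(x,dy\times I)$; $\overline S$ is partitioned into the sets $S_a\times\{b\}$ with $P^\varepsilon_{ab}\not\equiv0$, re-indexed $\overline S_1,\dots,\overline S_{\overline M}$; $\overline P^\varepsilon(\bar x,B)=\overline Q^\varepsilon(\bar x,B\times[0,\infty))$, and $\overline T^\varepsilon(\bar x,B)$ has law $\overline Q^\varepsilon(\bar x,B\times\cdot)/\overline P^\varepsilon(\bar x,B)$. *)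

From HB Require Import structures.
From mathcomp Require Import all_boot all_order all_algebra.
From mathcomp Require Import all_classical all_reals all_analysis.
From mathcomp Require Import measurable_realfun.
Set Implicit Arguments. Unset Strict Implicit. Unset Printing Implicit Defensive.
Import Order.TTheory GRing.Theory Num.Theory.
Import numFieldNormedType.Exports.
Local Open Scope classical_set_scope.
Local Open Scope ring_scope.

(* A family of kernels indexed by eps: Q eps x is a probability measure on
   S x R, carried by S x [0,oo). *)
Definition kfam d (S : measurableType d) (R : realType) :=
  R -> S -> probability (S * R)%type R.

Section defs.
Context {d : measure_display} {S : measurableType d} {R : realType}.
Variable Q : kfam S R.

Definition Pk (eps : R) (x : S) (B : set S) : \bar R := Q eps x (B `*` setT).

(* E g(T^eps(x,B)) = (1/P^eps(x,B)) int_{B x [0,oo)} g(t) Q^eps(x, dy dt) *)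
Definition ETg (eps : R) (x : S) (B : set S) (g : R -> R) : R :=
  fine (\int[Q eps x]_(z in B `*` setT) (g z.2)%:E) / fine (Pk eps x B).

Definition meanT (eps : R) (x : S) (B : set S) : \bar R :=
  ((\int[Q eps x]_(z in B `*` setT) (z.2)%:E) * ((fine (Pk eps x B))^-1)%:E)%E.

(* Extended kernel, integrated in time against g, on the set (A x {k}) x dt,
   from the point (x, j):
   int g(t) Qbar((x,j), (A x {k}) x dt)
     = (1/P(x,S_j)) int_{(A cap S_j) x [0,oo)} g(t) P(y,S_k) Q(x, dy dt). *)
Definition Qbar_int (M : nat) (Sp : 'I_M -> set S) (eps : R) (x : S)
  (j : 'I_M) (A : set S) (k : 'I_M) (g : R -> R) : R :=
  (fine (Pk eps x (Sp j)))^-1 *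
  fine (\int[Q eps x]_(z in (A `&` Sp j) `*` setT)
          (g z.2 * fine (Pk eps z.1 (Sp k)))%:E).

Definition Pbar (M : nat) (Sp : 'I_M -> set S) (eps : R) (x : S)
  (j : 'I_M) (A : set S) (k : 'I_M) : R :=
  Qbar_int Sp eps x j A k (fun _ => 1).

Definition ETbar (M : nat) (Sp : 'I_M -> set S) (eps : R) (x : S)
  (j : 'I_M) (A : set S) (k : 'I_M) (g : R -> R) : R :=
  Qbar_int Sp eps x j A k g / Pbar Sp eps x j A k.
End defs.

Definition unif_lim0 {X : Type} {R : realType} (A : set X) (g : R -> X -> R)
  (l : R) : Prop :=
  forall delta : R, 0 < delta -> exists eps0 : R, 0 < eps0 /\
    forall eps x, 0 < eps -> eps < eps0 -> A x -> `|g eps x - l| < delta.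

(* bounded continuous functions on [0,oo) (given as functions R -> R whose
   values off [0,oo) are irrelevant) *)
Definition bdd_cont0 {R : realType} (f : R -> R) : Prop :=
  {within [set t : R | 0 <= t], continuous f} /\
  exists C : R, forall t, 0 <= t -> `|f t| <= C.

(* "P^eps_{ij} is not identically 0": P^eps(x,S_j) > 0 for all x in S_i, eps>0 *)
Definition conn_pair {d : measure_display} {S : measurableType d} {R : realType}
  (Q : kfam S R) (M : nat) (Sp : 'I_M -> set S) (i j : 'I_M) : Prop :=
  forall (eps : R) (x : S), 0 < eps -> Sp i x -> (0 < Pk Q eps x (Sp j))%E.

From HB Require Import structures.
From mathcomp Require Import all_boot all_order all_algebra.
From mathcomp Require Import all_classical all_reals all_analysis.
From mathcomp Require Import measurable_realfun.
From mathcomp Require Import ring lra.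
Import Order.TTheory GRing.Theory Num.Theory.
Import numFieldNormedType.Exports.
Local Open Scope classical_set_scope.
Local Open Scope ring_scope.

(* Started in S_a, the extended chain first jumps to a point y of S_b, with the
   same holding time as the original chain, and then weights y by P(y, S_c).
   Since P(y, S_c) / P_bc -> 1 uniformly on S_b, the weighted average of
   f(T / tau_ab) under Q(x, .) differs from the plain average E f(T(x, S_b) / tau_ab)
   by at most 4 sup|f| times the relative error; the plain averages at two
   starting points of S_a are uniformly close by assumption.  Negative times are
   Q-null, so all integrals may be restricted to times t >= 0, where f(t / tau)
   is controlled. *)

Section integral_setD_null.
Context {d : measure_display} {T : measurableType d} {R : realType}.
Variable mu : {measure set T -> \bar R}.
Import HBNNSimple.
Local Open Scope ereal_scope.

Lemma ge0_integral_setD_null (D N : set T) (F : T -> \bar R) :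
  measurable N -> mu N = 0 -> (forall x, 0 <= F x) ->
  \int[mu]_(x in D) F x = \int[mu]_(x in D `\` N) F x.
Proof.
move=> mN N0 F0.
(* A simple function below F on D, cut off on N, lies below F on D \ N and has
   the same integral. *)
rewrite !(ge0_integralE mu (fun x _ => F0 x)) /=.
apply/eqP; rewrite eq_le; apply/andP; split; apply: ge_ereal_sup => _ [h hF <-].
- apply: ereal_sup_ubound.
  exists (proj_nnsfun h (measurableC mN)).
    move=> x /=; rewrite mindicE; have := hF x.
    have [xN|xN] := pselect (N x).
      by rewrite memNset ?mulr0 // => _; exact: erestrict_ge0.
    rewrite mem_set // mulr1.
    have [xD|xD] := pselect (D x).
      by rewrite !patchT //; exact: mem_set.
    by rewrite !patchC //; apply: mem_set => //= -[].
  rewrite -mrestrict -integral_nnsfun; last exact: measurableC.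
  rewrite -integralT_nnsfun (ge0_negligible_integral (D := setT) mN) //.
  + by rewrite setTD.
  + exact/measurable_EFinP.
  + by move=> x _; rewrite lee_fin.
- apply: ereal_sup_ubound; exists h => // x; apply: le_trans (hF x) _.
  have [xDN|xDN] := pselect ((D `\` N) x).
    by rewrite !patchT //; apply: mem_set; case: xDN.
  by rewrite patchC; [exact: erestrict_ge0 | exact: mem_set].
Qed.

Lemma integral_setD_null (D N : set T) (F : T -> \bar R) :
  measurable N -> mu N = 0 ->
  \int[mu]_(x in D) F x = \int[mu]_(x in D `\` N) F x.
Proof.
move=> mN N0; rewrite integralE [RHS]integralE.
by congr (_ - _); apply: ge0_integral_setD_null => // x;
  rewrite ?funepos_ge0 ?funeneg_ge0.
Qed.

End integral_setD_null.

Section bounded_Rintegral.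
Context {d : measure_display} {T : measurableType d} {R : realType}.
Variable mu : {finite_measure set T -> \bar R}.

Lemma bounded_integrable {D : set T} {F : T -> R} {c : R} :
  measurable D -> measurable_fun D F -> (forall x, D x -> `|F x| <= c) ->
  mu.-integrable D (EFin \o F).
Proof.
move=> mD mF Fc; apply: measurable_bounded_integrable => //.
  by rewrite ltey_eq fin_num_measure.
exists c; split; first exact: num_real.
by move=> c' cc' x Dx; apply: le_trans (Fc x Dx) (ltW cc').
Qed.

Lemma normr_Rintegral_le (D : set T) (F : T -> R) (c : R) :
  measurable D -> measurable_fun D F -> (forall x, D x -> `|F x| <= c) ->
  `|\int[mu]_(x in D) F x| <= c * fine (mu D).
Proof.
move=> mD mF Fc; have iF := bounded_integrable mD mF Fc.
apply: le_trans (le_normr_Rintegral mD iF) _.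
rewrite -Rintegral_cst //; apply: le_Rintegral => //; first exact: integrable_norm.
by apply: (bounded_integrable (c := `|c|)) => //; exact: measurable_cst.
Qed.

End bounded_Rintegral.

Lemma ratio_perturbation_le (R : realFieldType) (I1 I2 I3 p k K e : R) :
  0 < p -> 0 < k -> 0 <= K -> 0 <= e -> e <= 1/2 ->
  `|I1 - k * I3| <= K * k * e * p -> `|I2 - k * p| <= k * e * p ->
  `|I3| <= K * p ->
  `|I1 / I2 - I3 / p| <= 4 * K * e.
Proof.
move=> p0 k0 K0 e0 e12 h1 h2 h3.
have I2_lb : k * p / 2 <= I2.
  have : k * e * p <= k * (1/2) * p by rewrite ler_pM2r // ler_pM2l.
  by move: h2; rewrite ler_norml => /andP[h2 _]; lra.
have I2_gt0 : 0 < I2 by apply: lt_le_trans I2_lb; rewrite divr_gt0 // mulr_gt0.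
have -> : I1 / I2 - I3 / p = (p * (I1 - k * I3) - I3 * (I2 - k * p)) / (p * I2).
  by field; rewrite !gt_eqF.
rewrite normrM normfV (gtr0_norm (mulr_gt0 p0 I2_gt0)) ler_pdivrMr ?mulr_gt0 //.
apply: le_trans (ler_normB _ _) _; rewrite !normrM (gtr0_norm p0).
have b1 : p * `|I1 - k * I3| <= p * (K * k * e * p) by rewrite ler_pM2l.
have b2 : `|I3| * `|I2 - k * p| <= K * p * (k * e * p).
  by apply: ler_pM => //; rewrite !mulr_ge0 // ltW.
have b3 : 4 * K * e * (p * (k * p / 2)) <= 4 * K * e * (p * I2).
  by apply: ler_wpM2l; [rewrite !mulr_ge0 | rewrite ler_pM2l].
have : p * (K * k * e * p) + K * p * (k * e * p) = 4 * K * e * (p * (k * p / 2)).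
  by field.
lra.
Qed.

Lemma weighted_average_near {d : measure_display} {T : measurableType d} {R : realType}
    (mu : {finite_measure set T -> \bar R}) (D : set T) (G w : T -> R)
    (K k e : R) :
  measurable D -> measurable_fun D G -> measurable_fun D w ->
  (forall x, D x -> `|G x| <= K) -> 0 < fine (mu D) ->
  0 < k -> 0 <= e -> e <= 1/2 -> (forall x, D x -> `|w x - k| <= k * e) ->
  `|(\int[mu]_(x in D) (G x * w x)) / (\int[mu]_(x in D) w x)
    - (\int[mu]_(x in D) G x) / fine (mu D)| <= 4 * K * e.
Proof.
move=> mD mG mw GK muD_gt0 k_gt0 e_ge0 e_le wk.
have K_ge0 : 0 <= K.
  have [D0|/set0P[x Dx]] := eqVneq D set0; last exact: le_trans (GK x Dx).
  by move: muD_gt0; rewrite D0 measure0 ltxx.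
have wB x : D x -> `|w x| <= k * e + k.
  move=> /wk wk'; have := ler_normD (w x - k) k.
  by rewrite subrK (gtr0_norm k_gt0) => /le_trans; apply; rewrite lerD2r.
have mk : measurable_fun D (fun=> k) by exact: measurable_cst.
have mGw : measurable_fun D (fun x => G x * w x) by exact: measurable_funM.
have mkG : measurable_fun D (fun x => k * G x) by exact: measurable_funM.
have iG := bounded_integrable mu mD mG GK.
have iw := bounded_integrable mu mD mw wB.
have iGw : mu.-integrable D (EFin \o (fun x => G x * w x)).
  apply: (bounded_integrable mu mD mGw (c := K * (k * e + k))) => x Dx.
  by rewrite normrM ler_pM // ?GK ?wB.
have ikG : mu.-integrable D (EFin \o (fun x => k * G x)).
  apply: (bounded_integrable mu mD mkG (c := k * K)) => x Dx.
  by rewrite normrM gtr0_norm // ler_pM2l // GK.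
have ik : mu.-integrable D (EFin \o (fun=> k)).
  by apply: (bounded_integrable mu mD mk (c := k)) => x _; rewrite gtr0_norm.
apply: (@ratio_perturbation_le _ _ _ _ _ k) => //.
- rewrite -RintegralZl // -RintegralB //.
  apply: normr_Rintegral_le => //; first exact: measurable_funB.
  move=> x Dx; rewrite (mulrC k) -mulrBr normrM -mulrA.
  by apply: ler_pM => //; [exact: GK | exact: wk].
- rewrite -Rintegral_cst // -RintegralB //.
  by apply: normr_Rintegral_le => //; exact: measurable_funB.
- exact: normr_Rintegral_le.
Qed.

Lemma measurable_nneg {R : realType} : measurable [set t : R | 0 <= t].
Proof. by rewrite -set_itvcy; exact: measurable_itv. Qed.

Section nonnegative_times.
Context {d : measure_display} {S : measurableType d} {R : realType}.
Variable mu : {measure set (S * R)%type -> \bar R}.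
Hypothesis mu_neg_time : mu (setT `*` [set t : R | t < 0]) = 0%E.

Let measurable_neg_time :
  measurable (setT `*` [set t : R | t < 0] : set (S * R)%type).
Proof. by apply: measurableX => //; rewrite -set_itvNyo; exact: measurable_itv. Qed.

Lemma integral_nonneg_time (B : set S) (F : S * R -> \bar R) :
  (\int[mu]_(z in B `*` setT) F z
   = \int[mu]_(z in B `*` [set t : R | (0 <= t)%R]) F z)%E.
Proof.
rewrite (integral_setD_null mu _ _ _ measurable_neg_time mu_neg_time); congr integral.
apply/seteqP; split=> -[y t] /=.
  by move=> [[By _]] /not_andP[//|/negP]; rewrite -leNgt.
by move=> [By t_ge0]; split=> // -[_]; rewrite ltNge t_ge0.
Qed.

Lemma measure_nonneg_time {B : set S} : measurable B ->
  mu (B `*` setT) = mu (B `*` [set t | 0 <= t]).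
Proof.
move=> mB; rewrite -[LHS]mul1e -[RHS]mul1e -!integral_cst.
- exact: integral_nonneg_time.
- exact: measurableX mB measurable_nneg.
- exact: measurableX.
Qed.

End nonnegative_times.

Lemma Pk_fine_gt0 {d : measure_display} {S : measurableType d} {R : realType}
    {Q : kfam S R} {eps : R} {x : S} {B : set S} :
  measurable B -> (0 < Pk Q eps x B)%E -> 0 < fine (Pk Q eps x B).
Proof.
move=> mB PB_gt0; apply: fine_gt0; rewrite PB_gt0 /=.
by apply: le_lt_trans (probability_le1 _ (measurableX mB measurableT)) _; rewrite ltry.
Qed.

Section extended_kernel.
Context {d : measure_display} {S : measurableType d} {R : realType}.
Context {Q : kfam S R} {M : nat} {Sp : 'I_M -> set S} {eps : R}.
Hypothesis Sp_meas : forall i, measurable (Sp i).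
Hypothesis Q_meas : forall A : set (S * R)%type, measurable A ->
  measurable_fun setT (fun x => Q eps x A).
Hypothesis Q_time : forall x, Q eps x (setT `*` [set t : R | t < 0]) = 0%E.

Lemma ETbar_diag (x : S) (j k : 'I_M) (g : R -> R) :
  0 < fine (Pk Q eps x (Sp j)) ->
  ETbar Q Sp eps x j (Sp j) k g =
  (\int[Q eps x]_(z in Sp j `*` setT) (g z.2 * fine (Pk Q eps z.1 (Sp k))))
  / \int[Q eps x]_(z in Sp j `*` setT) fine (Pk Q eps z.1 (Sp k)).
Proof.
move=> Pj_gt0; rewrite /ETbar /Pbar /Qbar_int setIid.
under [X in _ / (_ * fine X)]eq_integral do rewrite mul1r.
by rewrite invfM invrK mulrACA mulVf ?mul1r // gt_eqF.
Qed.

Lemma measurable_fine_Pk (k : 'I_M) :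
  measurable_fun setT (fun y => fine (Pk Q eps y (Sp k))).
Proof.
apply: measurableT_comp; first exact: fine_measurable.
by apply: Q_meas; exact: measurableX.
Qed.

Lemma ETbar_ETg_near (x : S) (b c : 'I_M) (g : R -> R) (K k e : R) :
  (0 < Pk Q eps x (Sp b))%E -> measurable_fun [set t : R | 0 <= t] g ->
  (forall t, 0 <= t -> `|g t| <= K) -> 0 < k -> 0 <= e -> e <= 1/2 ->
  (forall y, Sp b y -> `|fine (Pk Q eps y (Sp c)) - k| <= k * e) ->
  `|ETbar Q Sp eps x b (Sp b) c g - ETg Q eps x (Sp b) g| <= 4 * K * e.
Proof.
move=> Pb_gt0 mg gK k_gt0 e_ge0 e_le wk.
have mD : measurable (Sp b `*` [set t : R | 0 <= t]).
  exact: measurableX measurable_nneg.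
have p_gt0 := Pk_fine_gt0 (Sp_meas b) Pb_gt0.
rewrite ETbar_diag // /ETg /Rintegral !(integral_nonneg_time _ (Q_time x)).
rewrite /Pk (measure_nonneg_time _ (Q_time x) (Sp_meas b)) in p_gt0 *.
apply: (weighted_average_near (Q eps x) _ (fun z => g z.2)
  (fun z => fine (Pk Q eps z.1 (Sp c))) K k e mD) => //.
- apply: (measurable_comp measurable_nneg) => //; first by move=> _ [[y t] [_ t_ge0] <-].
  exact: measurable_funTS.
- apply: measurable_funTS.
  exact: measurableT_comp (measurable_fine_Pk c) measurable_fst.
- by move=> z [_ /gK].
- by move=> z [/wk].
Qed.

End extended_kernel.

Section uniform_limits.
Context {X : Type} {R : realType}.

Lemma unif_lim0_set0 (g : R -> X -> R) (l : R) : unif_lim0 set0 g l.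
Proof. by move=> delta _; exists 1; split=> // eps x _ _ []. Qed.

Lemma unif_lim0_fst {Y : Type} (A : set X) (B : set Y) (g : R -> X -> R) (l : R) :
  unif_lim0 A g l -> unif_lim0 (A `*` B) (fun eps p => g eps p.1) l.
Proof.
move=> gl delta /gl[eps0 [eps0_gt0 H]]; exists eps0.
by split=> // eps p eps_gt0 eps_lt [Ap _]; exact: H.
Qed.

Lemma unif_lim0_sub_trans (A : set X) (u v w : R -> X -> R) :
  unif_lim0 A (fun eps x => u eps x - v eps x) 0 ->
  unif_lim0 A (fun eps x => v eps x - w eps x) 0 ->
  unif_lim0 A (fun eps x => u eps x - w eps x) 0.
Proof.
move=> uv vw delta delta_gt0; have delta2_gt0 : 0 < delta / 2 by rewrite divr_gt0.
have [e1 [e1_gt0 H1]] := uv _ delta2_gt0; have [e2 [e2_gt0 H2]] := vw _ delta2_gt0.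
exists (Num.min e1 e2); split=> [|eps x eps_gt0]; first by rewrite lt_min e1_gt0.
rewrite lt_min => /andP[lt1 lt2] Ax; have := H1 _ _ eps_gt0 lt1 Ax.
have := H2 _ _ eps_gt0 lt2 Ax; rewrite !subr0 => h2 h1.
rewrite -(subrKA (v eps x)) (splitr delta).
exact: le_lt_trans (ler_normD _ _) (ltrD h1 h2).
Qed.

End uniform_limits.

Lemma measurable_bdd_cont0_scale {R : realType} {f : R -> R} {s : R} :
  bdd_cont0 f -> 0 < s -> measurable_fun [set t : R | 0 <= t] (fun t => f (t / s)).
Proof.
move=> [f_cont _] s_gt0; apply: (measurable_comp measurable_nneg) => //.
- by move=> _ [t t_ge0 <-] /=; rewrite divr_ge0 // ltW.
- exact: (subspace_continuous_measurable_fun measurable_nneg).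
- by apply: measurable_funM => //; exact: measurable_cst.
Qed.

Section connected_pairs.
Context {d : measure_display} {S : measurableType d} {R : realType}.
Context {Q : kfam S R} {M : nat} {Sp : 'I_M -> set S}.

Lemma conn_pair_nonempty {i j : 'I_M} {x : S} :
  conn_pair Q Sp i j -> Sp i x -> exists y, Sp j y.
Proof.
move=> Hij ix; have := Hij 1 x ltr01 ix.
have [->|/set0P//] := eqVneq (Sp j) set0.
by rewrite /Pk set0X measure0 ltxx.
Qed.

Lemma conn_pair_neq {i j : 'I_M} {x : S} :
  (forall (eps : R) k y, 0 < eps -> Sp k y -> Pk Q eps y (Sp k) = 0%E) ->
  conn_pair Q Sp i j -> Sp i x -> i != j.
Proof.
move=> no_self Hij ix; apply/eqP => ij; move: (Hij 1 x ltr01 ix).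
by rewrite -ij no_self // ltxx.
Qed.

Hypothesis Sp_meas : forall i, measurable (Sp i).
Hypothesis Q_meas : forall eps : R, 0 < eps ->
  forall A : set (S * R)%type, measurable A ->
  measurable_fun setT (fun x => Q eps x A).
Hypothesis Q_time : forall (eps : R) x, 0 < eps ->
  Q eps x (setT `*` [set t : R | t < 0]) = 0%E.

Lemma ETbar_ETg_unif (a b c : 'I_M) (Pbc : R -> R) (g : R -> R -> R) (C : R) :
  conn_pair Q Sp a b -> (forall eps, 0 < eps -> 0 < Pbc eps) ->
  unif_lim0 (Sp b) (fun eps y => fine (Pk Q eps y (Sp c)) / Pbc eps) 1 ->
  (forall eps, 0 < eps -> measurable_fun [set t : R | 0 <= t] (g eps)) ->
  (forall eps t, 0 < eps -> 0 <= t -> `|g eps t| <= C) ->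
  unif_lim0 (Sp a) (fun eps x =>
    ETbar Q Sp eps x b (Sp b) c (g eps) - ETg Q eps x (Sp b) (g eps)) 0.
Proof.
move=> Hab Pbc_gt0 Pbc_lim mg gC delta delta_gt0.
have C_ge0 : 0 <= C := le_trans (normr_ge0 _) (gC 1 0 ltr01 (lexx 0)).
have C1_gt0 : 0 < C + 1 by rewrite ltr_wpDl.
pose e := Num.min (1/2) (delta / (4 * (C + 1))).
have e_gt0 : 0 < e by rewrite lt_min !divr_gt0 // mulr_gt0.
have [eps0 [eps0_gt0 near1]] := Pbc_lim e e_gt0.
exists eps0; split=> // eps x eps_gt0 eps_lt ax; rewrite subr0.
have k_gt0 := Pbc_gt0 eps eps_gt0.
apply: le_lt_trans.
  apply: (ETbar_ETg_near Sp_meas (Q_meas eps eps_gt0) (Q_time eps ^~ eps_gt0)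
    x b c (g eps) C (Pbc eps) e (Hab eps x eps_gt0 ax) (mg eps eps_gt0)
    (gC eps ^~ eps_gt0) k_gt0 (ltW e_gt0)).
  - by rewrite ge_min lexx.
  - move=> y /(near1 eps y eps_gt0 eps_lt) /ltW.
    set u := fine _; have -> : u - Pbc eps = Pbc eps * (u / Pbc eps - 1).
      by field; rewrite gt_eqF.
    by rewrite normrM gtr0_norm // ler_pM2l.
apply: (le_lt_trans (y := 4 * C * (delta / (4 * (C + 1))))).
  by rewrite ler_wpM2l ?mulr_ge0 // ge_min lexx orbT.
have -> : 4 * C * (delta / (4 * (C + 1))) = delta * (C / (C + 1)).
  by field; rewrite gt_eqF.
by rewrite gtr_pMr // ltr_pdivrMr // mul1r ltrDl.
Qed.

End connected_pairs.

Theorem lemma4p2 (d : measure_display) (S : measurableType d) (R : realType)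
  (M : nat) (Sp : 'I_M -> set S)
  (Sp_meas : forall i, measurable (Sp i))
  (Sp_disj : forall i j, i != j -> Sp i `&` Sp j = set0)
  (Sp_cover : forall x, exists i, Sp i x)
  (Q : kfam S R)
  (Q_meas : forall eps : R, 0 < eps -> forall A : set (S * R)%type, measurable A ->
     measurable_fun setT (fun x : S => Q eps x A))
  (Q_time : forall (eps : R) x, 0 < eps ->
     Q eps x (setT `*` [set t : R | t < 0]) = 0%E)
  (Pij tau : 'I_M -> 'I_M -> R -> R)
  (H_self : forall (eps : R) i x, 0 < eps -> Sp i x -> Pk Q eps x (Sp i) = 0%E)
  (H_dich : forall i j, i != j ->
     (forall (eps : R) x, 0 < eps -> Sp i x -> Pk Q eps x (Sp j) = 0%E)
     \/ conn_pair Q Sp i j)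
  (H_P : forall i j, i != j -> conn_pair Q Sp i j ->
     (forall eps : R, 0 < eps -> 0 < Pij i j eps) /\
     unif_lim0 (Sp i) (fun eps x => fine (Pk Q eps x (Sp j)) / Pij i j eps) 1)
  (H_tau : forall i j, i != j -> conn_pair Q Sp i j ->
     (forall eps : R, 0 < eps -> 0 < tau i j eps) /\
     (forall delta : R, 0 < delta -> exists eps0 : R, 0 < eps0 /\
        forall eps x, 0 < eps -> eps < eps0 -> Sp i x ->
          (`| meanT Q eps x (Sp j) * ((tau i j eps)^-1)%:E - 1 | < delta%:E)%E))
  (H_f : forall i j, i != j -> conn_pair Q Sp i j ->
     forall f : R -> R, bdd_cont0 f ->
     unif_lim0 (Sp i `*` Sp i)
       (fun eps p => ETg Q eps p.1 (Sp j) (fun t => f (t / tau i j eps))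
                   - ETg Q eps p.2 (Sp j) (fun t => f (t / tau i j eps))) 0)
  (a b c : 'I_M) (Hab : conn_pair Q Sp a b) (Hbc : conn_pair Q Sp b c)
  (f : R -> R) (hf : bdd_cont0 f) :
  unif_lim0 (Sp a `*` Sp a)
    (fun eps p =>
       ETbar Q Sp eps p.1 b (Sp b) c (fun t => f (t / tau a b eps))
     - ETg Q eps p.2 (Sp b) (fun t => f (t / tau a b eps))) 0.
Proof.
have [Sa0|/set0P[x ax]] := eqVneq (Sp a) set0.
  by rewrite Sa0 set0X; exact: unif_lim0_set0.
have ab := conn_pair_neq H_self Hab ax.
have [y b_y] := conn_pair_nonempty Hab ax.
have bc := conn_pair_neq H_self Hbc b_y.
have [Pbc_gt0 Pbc_lim] := H_P b c bc Hbc.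
have [tau_gt0 _] := H_tau a b ab Hab.
have [_ [C fC]] := hf.
have near := ETbar_ETg_unif Sp_meas Q_meas Q_time a b c _
  (fun eps t => f (t / tau a b eps)) C Hab Pbc_gt0 Pbc_lim
  (fun eps eps_gt0 => measurable_bdd_cont0_scale hf (tau_gt0 eps eps_gt0))
  (fun eps t eps_gt0 t_ge0 => fC _ (divr_ge0 t_ge0 (ltW (tau_gt0 eps eps_gt0)))).
apply: (unif_lim0_sub_trans _ _
  (fun eps p => ETg Q eps p.1 (Sp b) (fun t => f (t / tau a b eps)))).
  exact: unif_lim0_fst near.
exact: H_f.
Qed.
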